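(* Let $X$ be a d-space such that the preorder $\le$ on $X$ induced by $\vec\pi_1(X)$ (namely $x\le y$ iff there is a morphism $x\to y$ in $\vec\pi_1(X)$) is antisymmetric and makes $X$ a compact pospace. Let $X=X_0\supseteq X_1\supseteq\dots\supseteq X_n=A$ with functors $P_i:\vec\pi_1(X,X_{i-1})\to\vec\pi_1(X,X_i)$ be an extremal model of $X$ in which each $X_i$ ($1\le i\le n$) is compact. Then $\mathrm{Ext}(\vec\pi_1(X,A))=\mathrm{Ext}(X)$; that is, the extremal model induces an isomorphism (equality) of the fundamental bipartite graphs $\vec\pi_1(X,\mathrm{Ext}(X))$ and $\vec\pi_1(X,\mathrm{Ext}(\vec\pi_1(X,A)))$.
   Context: A d-space is a topological space $X$ with a set $dX$ of continuous paths $[0,1]\to X$ (dipaths) containing all constant paths, closed under precomposition with continuous non-decreasing maps $[0,1]\to[0,1]$, and closed under concatenation; subsets carry the dipaths with image in the subset. $\vec I$ is $[0,1]$ with all continuous non-decreasing paths as dipaths. The fundamental category $\vec\pi_1(X)$ has as objects the points of $X$ and as morphisms $a\to b$ the classes of dipaths from $a$ to $b$ under the equivalence relation generated by endpoint-fixing directed homotopies (dimaps $H:\vec I\times\vec I\to X$ with $H(t,0)=\gamma(t)$, $H(t,1)=\gamma'(t)$, $H(0,s)=a$, $H(1,s)=b$); composition is concatenation. For $A\subseteq X$, $\vec\pi_1(X,A)$ is the full subcategory on objects in $A$. A pospace is a topological space with a partial order $\le$ that is a closed subset of $X\times X$. For a category $\mathcal C$, $x\le y$ iff there is a morphism $x\to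 y$; minimal, maximal, extremal objects are defined with respect to this preorder ($a$ minimal iff $x\le a\Rightarrow x=a$; maximal iff $a\le x\Rightarrow x=a$); $\mathrm{Ext}(\mathcal C)$ is the set of extremal objects and $\mathrm{Ext}(X)=\mathrm{Ext}(\vec\pi_1(X))$. For $A\subseteq B\subseteq X$ with inclusion $\iota:\vec\pi_1(X,A)\to\vec\pi_1(X,B)$, a future retract is a functor $P:\vec\pi_1(X,B)\to\vec\pi_1(X,A)$ left adjoint to $\iota$ with unit $\eta_a=\mathrm{id}_a$ for $a\in A$; a past retract is a right adjoint $P$ of $\iota$ with counit $\varepsilon_a=\mathrm{id}_a$ for $a\in A$. An extremal model of $X$ is a chain $X=X_0\supseteq\dots\supseteq X_n=A$ with functors $P_i:\vec\pi_1(X,X_{i-1})\to\vec\pi_1(X,X_i)$, each a future or past retract, with $\mathrm{Ext}(X)\subseteq A$. *)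

From Stdlib Require Import Reals Lra List Relation_Operators.
Open Scope R_scope.
Set Implicit Arguments.

Record TopSpace := {
  pt :> Type;
  is_open : (pt -> Prop) -> Prop;
  open_full : is_open (fun _ => True);
  open_empty : is_open (fun _ => False);
  open_union : forall F : (pt -> Prop) -> Prop,
      (forall U, F U -> is_open U) -> is_open (fun x => exists U, F U /\ U x);
  open_inter : forall U V, is_open U -> is_open V -> is_open (fun x => U x /\ V x)
}.

Definition compact_sub {T : TopSpace} (K : T -> Prop) : Prop :=
  forall F : (T -> Prop) -> Prop,
    (forall U, F U -> is_open T U) ->
    (forall x, K x -> exists U, F U /\ U x) ->
    exists l : list (T -> Prop),
      (forall U, In U l -> F U) /\ (forall x, K x -> exists U, In U l /\ U x).

Definition closed_rel {T : TopSpace} (Rl : T -> T -> Prop) : Prop :=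
  forall x y, ~ Rl x y ->
    exists U V, is_open T U /\ is_open T V /\ U x /\ V y /\
      (forall x' y', U x' -> V y' -> ~ Rl x' y').

Definition I := { t : R | 0 <= t <= 1 }.
Definition ival (t : I) : R := proj1_sig t.

Lemma clamp_prf (x : R) : 0 <= Rmax 0 (Rmin 1 x) <= 1.
Proof.
  unfold Rmax, Rmin; destruct (Rle_dec 1 x); destruct (Rle_dec x 1);
  repeat match goal with |- context [Rle_dec ?a ?b] => destruct (Rle_dec a b) end; lra.
Qed.

Definition clamp (x : R) : I := exist _ (Rmax 0 (Rmin 1 x)) (clamp_prf x).
Definition I0 : I := clamp 0.
Definition I1 : I := clamp 1.

Definition cont_II (phi : I -> I) : Prop :=
  forall t e, 0 < e -> exists d, 0 < d /\
    forall t' : I, Rabs (ival t' - ival t) < d -> Rabs (ival (phi t') - ival (phi t)) < e.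
Definition nondecr (phi : I -> I) : Prop :=
  forall s t : I, ival s <= ival t -> ival (phi s) <= ival (phi t).

Definition cont_path {T : TopSpace} (p : I -> T) : Prop :=
  forall U, is_open T U -> forall t, U (p t) ->
    exists e, 0 < e /\ forall t' : I, Rabs (ival t' - ival t) < e -> U (p t').

Definition cont_sq {T : TopSpace} (H : I -> I -> T) : Prop :=
  forall U, is_open T U -> forall t s, U (H t s) ->
    exists e, 0 < e /\ forall t' s' : I,
      Rabs (ival t' - ival t) < e -> Rabs (ival s' - ival s) < e -> U (H t' s').

Definition concat (T : Type) (p q : I -> T) : I -> T :=
  fun t => if Rle_dec (ival t) (/2) then p (clamp (2 * ival t))
           else q (clamp (2 * ival t - 1)).

Definition cst (T : Type) (x : T) : I -> T := fun _ => x.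

Record DSpace := {
  dtop :> TopSpace;
  dpath : (I -> dtop) -> Prop;
  dpath_cont : forall p, dpath p -> @cont_path dtop p;
  dpath_const : forall x : dtop, dpath (cst x);
  dpath_reparam : forall p phi, dpath p -> cont_II phi -> nondecr phi ->
                    dpath (fun t => p (phi t));
  dpath_concat : forall p q, dpath p -> dpath q -> p I1 = q I0 -> dpath (concat p q)
}.

(** dimaps from ->I x ->I (product d-space: dipaths are pairs of
    continuous non-decreasing paths) *)
Definition dimap_sq {X : DSpace} (H : I -> I -> X) : Prop :=
  cont_sq H /\
  forall a b : I -> I, cont_II a -> nondecr a -> cont_II b -> nondecr b ->
    dpath X (fun t => H (a t) (b t)).

(** * The fundamental category ->pi_1(X)
    Morphisms a -> b are represented by dipaths from a to b; equality of
    morphisms is [mor_eq], the equivalence relation generated by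
    endpoint-fixing directed homotopy.  Composition is [concat]
    (diagrammatic order: [concat g d] is "g then d"). *)
Definition mor {X : DSpace} (a b : X) (g : I -> X) : Prop :=
  dpath X g /\ g I0 = a /\ g I1 = b.

Definition dihom {X : DSpace} (g g' : I -> X) : Prop :=
  exists H : I -> I -> X, dimap_sq H /\
    (forall t, H t I0 = g t) /\ (forall t, H t I1 = g' t) /\
    (forall s, H I0 s = g I0) /\ (forall s, H I1 s = g I1).

Definition mor_eq {X : DSpace} : (I -> X) -> (I -> X) -> Prop :=
  clos_refl_sym_trans _ (@dihom X).

(** Preorder of the full subcategory ->pi_1(X,S) *)
Definition le_in {X : DSpace} (S : X -> Prop) (x y : X) : Prop :=
  S x /\ S y /\ exists g, mor x y g.

Definition full (X : DSpace) : X -> Prop := fun _ => True.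

Definition is_minimal {X : DSpace} (S : X -> Prop) (a : X) : Prop :=
  S a /\ forall x, le_in S x a -> x = a.
Definition is_maximal {X : DSpace} (S : X -> Prop) (a : X) : Prop :=
  S a /\ forall x, le_in S a x -> x = a.
Definition Ext {X : DSpace} (S : X -> Prop) (a : X) : Prop :=
  is_minimal S a \/ is_maximal S a.

(** Functor ->pi_1(X,B) -> ->pi_1(X,A), given by an object map F0 and a
    (representative-level) morphism map F1 *)
Definition is_functor {X : DSpace} (B A : X -> Prop)
    (F0 : X -> X) (F1 : (I -> X) -> (I -> X)) : Prop :=
  (forall x, B x -> A (F0 x)) /\
  (forall x y g, B x -> B y -> mor x y g -> mor (F0 x) (F0 y) (F1 g)) /\
  (forall x y g d, B x -> B y -> mor x y g -> mor x y d -> mor_eq g d ->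
       mor_eq (F1 g) (F1 d)) /\
  (forall x, B x -> mor_eq (F1 (cst x)) (cst (F0 x))) /\
  (forall x y z g d, B x -> B y -> B z -> mor x y g -> mor y z d ->
       mor_eq (F1 (concat g d)) (concat (F1 g) (F1 d))).

(** Future retract: a functor P left adjoint to the inclusion, given by its
    unit eta (natural, universal), with eta_a = id_a for a in A. *)
Definition future_retract {X : DSpace} (B A : X -> Prop) : Prop :=
  exists (F0 : X -> X) (F1 : (I -> X) -> (I -> X)) (eta : X -> I -> X),
    is_functor B A F0 F1 /\
    (forall b, B b -> mor b (F0 b) (eta b)) /\
    (forall x y g, B x -> B y -> mor x y g ->
        mor_eq (concat (eta x) (F1 g)) (concat g (eta y))) /\
    (forall b a f, B b -> A a -> mor b a f ->
        exists g, mor (F0 b) a g /\ mor_eq (concat (eta b) g) f /\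
          forall g', mor (F0 b) a g' -> mor_eq (concat (eta b) g') f -> mor_eq g' g) /\
    (forall a, A a -> F0 a = a /\ mor_eq (eta a) (cst a)).

(** Past retract: a functor P right adjoint to the inclusion, given by its
    counit eps (natural, universal), with eps_a = id_a for a in A. *)
Definition past_retract {X : DSpace} (B A : X -> Prop) : Prop :=
  exists (F0 : X -> X) (F1 : (I -> X) -> (I -> X)) (eps : X -> I -> X),
    is_functor B A F0 F1 /\
    (forall b, B b -> mor (F0 b) b (eps b)) /\
    (forall x y g, B x -> B y -> mor x y g ->
        mor_eq (concat (F1 g) (eps y)) (concat (eps x) g)) /\
    (forall b a f, B b -> A a -> mor a b f ->
        exists g, mor a (F0 b) g /\ mor_eq (concat g (eps b)) f /\
          forall g', mor a (F0 b) g' -> mor_eq (concat g' (eps b)) f -> mor_eq g' g) /\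
    (forall a, A a -> F0 a = a /\ mor_eq (eps a) (cst a)).

(* The only property of the model that matters is Ext(X) ⊆ A.  The argument
   is order-theoretic:
   - a closed partial order on a compact space bounds every nonempty chain
     from below (finite subcover argument), so by Zorn's lemma every point
     lies above a minimal point; dually (the opposite order is closed too)
     every point lies below a maximal point;
   - for any preorder-antisymmetric order with that property, a subset S
     containing all minimal points has exactly the same minimal points as the
     whole space (minimal_in_restrict), and dually for maximal points;
   - minimal/maximal objects of ->pi_1(X,S) are the minimal/maximal elements
     of S for "there is a dipath from x to y", which is a preorder. *)

From Stdlib Require Import Reals Lra Classical ProofIrrelevance.
From mathcomp Require boolp classical_sets.

Section MinimalElements.
Variables (T : Type) (R : T -> T -> Prop).
Hypothesis R_refl : forall x, R x x.
Hypothesis R_trans : forall x y z, R x y -> R y z -> R x z.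
Hypothesis R_anti : forall x y, R x y -> R y x -> x = y.

Definition minimal_in (S : T -> Prop) (a : T) : Prop :=
  S a /\ forall x, S x -> R x a -> x = a.

Definition chain (C : T -> Prop) : Prop :=
  forall a b, C a -> C b -> R a b \/ R b a.

(* Zorn's lemma, downwards and below a given point: if every nonempty chain
   has a lower bound, every point y lies above a minimal element.  It is
   applied to the opposite order on the down-set of y, where the empty
   chain is bounded by y itself. *)
Lemma exists_minimal_below :
  (forall C, (exists c, C c) -> chain C -> exists b, forall c, C c -> R b c) ->
  forall y, exists m, R m y /\ minimal_in (fun _ => True) m.
Proof.
  intros lower_bound y.
  pose (D := { x : T | R x y }).
  pose (above := fun a b : D => boolp.asbool (R (proj1_sig b) (proj1_sig a))).
  assert (aboveE : forall a b, is_true (above a b) <-> R (proj1_sig b) (proj1_sig a)).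
  { intros a b; split; [apply boolp.asboolW | apply boolp.asboolT]. }
  destruct (@classical_sets.Zorn D above) as [[m m_y] m_max].
  - intros a; apply aboveE, R_refl.
  - intros a b c ab bc; apply aboveE.
    exact (R_trans _ _ _ (proj1 (aboveE _ _) bc) (proj1 (aboveE _ _) ab)).
  - intros [a ay] [b b_y] ab ba.
    assert (a = b) by exact (R_anti _ _ (proj1 (aboveE _ _) ba) (proj1 (aboveE _ _) ab)).
    subst b; f_equal; apply proof_irrelevance.
  - intros A A_chain.
    destruct (classic (exists a, A a)) as [[[a0 a0y] Aa0] | A_empty].
    + destruct (lower_bound (fun x => exists a, A a /\ proj1_sig a = x))
        as [b b_low].
      * exists a0, (exist _ a0 a0y); auto.
      * intros x z [a [Aa <-]] [c [Ac <-]].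
        destruct (A_chain a c Aa Ac) as [ac | ca]; [right | left]; apply aboveE; assumption.
      * assert (b_y : R b y).
        { apply R_trans with a0; auto. apply b_low; exists (exist _ a0 a0y); auto. }
        exists (exist _ b b_y); intros a Aa; apply aboveE, b_low; eauto.
    + exists (exist (fun x => R x y) y (R_refl y)); intros a Aa; exfalso; eauto.
  - (* a maximal element for the opposite order is minimal below y *)
    exists m; split; [exact m_y | split; [exact Logic.I |]].
    intros x _ xm.
    set (x' := exist (fun z => R z y) x (R_trans _ _ _ xm m_y) : D).
    exact (f_equal (@proj1_sig _ _) (m_max x' (proj2 (aboveE (exist _ m m_y) x') xm))).
Qed.

(* Among a subset S containing every minimal point, a point is minimal in S
   iff it is minimal in T, provided every point lies above a minimal point:
   a point of S strictly above something lies above a minimal point of T,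
   which belongs to S. *)
Lemma minimal_in_restrict (S : T -> Prop)
  (below : forall y, exists m, R m y /\ minimal_in (fun _ => True) m)
  (S_minimal : forall m, minimal_in (fun _ => True) m -> S m) :
  forall x, minimal_in S x <-> minimal_in (fun _ => True) x.
Proof.
  intro x; split.
  - intros [Sx x_min]; split; [exact Logic.I |].
    intros z _ zx.
    destruct (below z) as [m [mz m_min]].
    assert (mx : m = x) by (apply x_min; [apply S_minimal | apply R_trans with z]; auto).
    subst m; apply R_anti; auto.
  - intros x_min; split; [apply S_minimal; exact x_min |].
    intros z _ zx; apply (proj2 x_min); auto.
Qed.
End MinimalElements.
Arguments minimal_in {T} R S a.
Arguments chain {T} R C.

Section CompactChains.
Variables (T : TopSpace) (R : T -> T -> Prop).
Hypothesis R_refl : forall x, R x x.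
Hypothesis R_trans : forall x y z, R x y -> R y z -> R x z.

(* Finitely many points of a nonempty chain have a common lower bound in the
   chain; here the points are witnesses chosen for a finite list of labels. *)
Lemma chain_finite_lower_bound {A : Type} (C : T -> Prop) (c0 : T) (Cc0 : C c0)
  (C_chain : chain R C) (Q : A -> T -> Prop) (l : list A) :
  (forall U, List.In U l -> exists c, C c /\ Q U c) ->
  exists m, C m /\ forall U, List.In U l -> exists c, C c /\ Q U c /\ R m c.
Proof.
  induction l as [| U l IH]; intros witnesses.
  - exists c0; split; [exact Cc0 | intros U []].
  - destruct IH as [m [Cm m_low]]; [intros V HV; apply witnesses; right; exact HV |].
    destruct (witnesses U (or_introl eq_refl)) as [c [Cc QUc]].
    destruct (C_chain m c Cm Cc) as [mc | cm].
    + exists m; split; [exact Cm |].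
      intros V [<- | HV]; [exists c; auto | apply m_low; exact HV].
    + exists c; split; [exact Cc |].
      intros V [<- | HV]; [exists c; auto |].
      destruct (m_low V HV) as [c' [Cc' [QVc' mc']]].
      exists c'; split; [| split]; eauto.
Qed.

(* In a compact space, a closed preorder bounds every nonempty chain from
   below.  Otherwise each point z has an open neighbourhood avoiding the
   down-set of some chain element; finitely many of them cover the space,
   and a common lower bound in the chain of the finitely many chosen chain
   elements lies in one of those neighbourhoods, a contradiction. *)
Lemma compact_chain_lower_bound (T_compact : compact_sub (fun _ : T => True))
  (R_closed : closed_rel R) (C : T -> Prop) :
  (exists c, C c) -> chain R C -> exists b, forall c, C c -> R b c.
Proof.
  intros [c0 Cc0] C_chain; apply NNPP; intro no_bound.
  pose (avoids := fun (U : T -> Prop) c => forall x, U x -> ~ R x c).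
  pose (F := fun U => is_open T U /\ exists c, C c /\ avoids U c).
  destruct (T_compact F) as [l [l_F l_cover]].
  - intros U [U_open _]; exact U_open.
  - intros z _.
    assert (exists c, C c /\ ~ R z c) as [c [Cc zc]].
    { apply NNPP; intro all_above; apply no_bound; exists z.
      intros c Cc; apply NNPP; intro zc; apply all_above; eauto. }
    destruct (R_closed z c zc) as [U [V [U_open [_ [Uz [Vc UV]]]]]].
    exists U; split; [split; [exact U_open |] | exact Uz].
    exists c; split; [exact Cc |]. intros x Ux; apply UV; [exact Ux | exact Vc].
  - destruct (chain_finite_lower_bound C c0 Cc0 C_chain avoids l) as [m [Cm m_low]].
    { intros U HU; apply (proj2 (l_F U HU)). }
    destruct (l_cover m Logic.I) as [U [HU Um]].
    destruct (m_low U HU) as [c [_ [U_avoids mc]]].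
    exact (U_avoids m Um mc).
Qed.
End CompactChains.

Lemma closed_rel_flip {T : TopSpace} (R : T -> T -> Prop) :
  closed_rel R -> closed_rel (fun x y => R y x).
Proof.
  intros R_closed x y yx.
  destruct (R_closed y x yx) as [U [V [U_open [V_open [Uy [Vx UV]]]]]].
  exists V, U; repeat split; auto.
Qed.

Lemma ival_I0 : ival I0 = 0.
Proof. unfold ival, I0, clamp; simpl; unfold Rmax, Rmin; repeat destruct (Rle_dec _ _); lra. Qed.

Lemma ival_I1 : ival I1 = 1.
Proof. unfold ival, I1, clamp; simpl; unfold Rmax, Rmin; repeat destruct (Rle_dec _ _); lra. Qed.

Lemma concat_I0 (T : Type) (p q : I -> T) : concat p q I0 = p I0.
Proof.
  unfold concat; rewrite ival_I0.
  destruct (Rle_dec 0 (/ 2)); [| lra].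
  replace (2 * 0) with 0 by lra; reflexivity.
Qed.

Lemma concat_I1 (T : Type) (p q : I -> T) : concat p q I1 = q I1.
Proof.
  unfold concat; rewrite ival_I1.
  destruct (Rle_dec 1 (/ 2)); [lra |].
  replace (2 * 1 - 1) with 1 by lra; reflexivity.
Qed.

Lemma closed_order_minimal_below {T : TopSpace} (R : T -> T -> Prop)
  (R_refl : forall x, R x x) (R_trans : forall x y z, R x y -> R y z -> R x z)
  (R_anti : forall x y, R x y -> R y x -> x = y)
  (T_compact : compact_sub (fun _ : T => True)) (R_closed : closed_rel R) :
  forall y, exists m, R m y /\ minimal_in R (fun _ => True) m.
Proof.
  apply exists_minimal_below; auto.
  intros C C_inhabited C_chain.
  exact (compact_chain_lower_bound T R R_refl R_trans T_compact R_closed C C_inhabited C_chain).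
Qed.

Lemma reach_refl (X : DSpace) (x : X) : le_in (@full X) x x.
Proof.
  split; [exact Logic.I | split; [exact Logic.I |]].
  exists (cst x); split; [apply dpath_const | split; reflexivity].
Qed.

Lemma reach_trans (X : DSpace) (x y z : X) :
  le_in (@full X) x y -> le_in (@full X) y z -> le_in (@full X) x z.
Proof.
  intros [_ [_ [p [p_di [p0 p1]]]]] [_ [_ [q [q_di [q0 q1]]]]].
  split; [exact Logic.I | split; [exact Logic.I |]].
  exists (concat p q); split; [apply dpath_concat; congruence |].
  rewrite concat_I0, concat_I1; split; assumption.
Qed.

Lemma is_minimal_iff (X : DSpace) (S : X -> Prop) (a : X) :
  is_minimal S a <-> minimal_in (le_in (@full X)) S a.
Proof.
  split; intros [Sa a_min]; split; auto.
  - intros x Sx [_ [_ g]]; apply a_min; repeat split; auto.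
  - intros x [Sx [_ g]]; apply a_min; [exact Sx | repeat split; auto].
Qed.

Lemma is_maximal_iff (X : DSpace) (S : X -> Prop) (a : X) :
  is_maximal S a <-> minimal_in (fun x y => le_in (@full X) y x) S a.
Proof.
  split; intros [Sa a_max]; split; auto.
  - intros x Sx [_ [_ g]]; apply a_max; repeat split; auto.
  - intros x [_ [Sx g]]; apply a_max; [exact Sx | repeat split; auto].
Qed.

Theorem theorem3p2 (X : DSpace)
  (Hanti : forall x y : X, le_in (@full X) x y -> le_in (@full X) y x -> x = y)
  (Hcomp : compact_sub (@full X))
  (Hclosed : closed_rel (le_in (@full X)))
  (n : nat) (Xs : nat -> X -> Prop)
  (HX0 : forall x, Xs 0%nat x)
  (Hsub : forall i, (1 <= i <= n)%nat -> forall x, Xs i x -> Xs (i - 1)%nat x)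
  (Hret : forall i, (1 <= i <= n)%nat ->
            future_retract (Xs (i - 1)%nat) (Xs i) \/ past_retract (Xs (i - 1)%nat) (Xs i))
  (Hext : forall x, Ext (@full X) x -> Xs n x)
  (Hcpt : forall i, (1 <= i <= n)%nat -> compact_sub (Xs i)) :
  forall x : X, Ext (Xs n) x <-> Ext (@full X) x.
Proof.
  pose (le := le_in (@full X)).
  pose (ge := fun x y => le y x).
  assert (le_refl : forall x, le x x) by apply reach_refl.
  assert (le_trans : forall x y z, le x y -> le y z -> le x z) by apply reach_trans.
  assert (minimal_below : forall y, exists m, le m y /\ minimal_in le (@full X) m)
    by exact (closed_order_minimal_below le le_refl le_trans Hanti Hcomp Hclosed).
  assert (maximal_above : forall y, exists m, ge m y /\ minimal_in ge (@full X) m).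
  { apply closed_order_minimal_below; [exact le_refl | | | exact Hcomp |].
    - intros x y z xy yz; exact (le_trans z y x yz xy).
    - intros x y xy yx; exact (Hanti x y yx xy).
    - exact (closed_rel_flip le Hclosed). }
  intro x; unfold Ext; rewrite !is_minimal_iff, !is_maximal_iff; fold le ge.
  rewrite (minimal_in_restrict _ le le_trans Hanti (Xs n) minimal_below),
    (minimal_in_restrict _ ge (fun x y z xy yz => le_trans z y x yz xy)
       (fun x y xy yx => Hanti x y yx xy) (Xs n) maximal_above).
  - reflexivity.
  - intros m m_max; apply Hext; right; apply is_maximal_iff; exact m_max.
  - intros m m_min; apply Hext; left; apply is_minimal_iff; exact m_min.
Qed.
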